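(* Let $f,g\colon X\to Y$ be continuous maps, let $\pi\colon PY\to Y\times Y$, $\pi(\gamma)=(\gamma(0),\gamma(1))$, be the path fibration, and let $q\colon P\to X$ be the pull-back of $\pi$ along $(f,g)\colon X\to Y\times Y$; that is, $P=\{(x,\gamma)\in X\times PY:\gamma(0)=f(x),\ \gamma(1)=g(x)\}$ and $q(x,\gamma)=x$. Then $\mathrm{D}(f,g)=\mathrm{secat}(q)$.
   Context: $PY$ denotes the space of continuous paths $[0,1]\to Y$ with the compact-open topology. For continuous maps $f,g\colon X\to Y$, the homotopic distance $\mathrm{D}(f,g)$ is the least integer $n\geq 0$ such that there is an open cover $\{U_0,\dots,U_n\}$ of $X$ with $f|_{U_j}\simeq g|_{U_j}$ for all $j$ ($\infty$ if none exists). The Švarc genus (sectional category) $\mathrm{secat}(p)$ of a fibration $p\colon E\to B$ is the least integer $n\geq 0$ such that $B$ is covered by open sets $V_0,\dots,V_n$ over each of which $p$ admits a continuous local section. *)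

From HB Require Import structures.
From mathcomp Require Import all_boot all_order all_algebra.
From mathcomp Require Import all_classical all_reals topology normedtype.
Set Implicit Arguments. Unset Strict Implicit. Unset Printing Implicit Defensive.
Import Order.TTheory GRing.Theory Num.Theory numFieldNormedType.Exports.
Local Open Scope classical_set_scope.
Local Open Scope ring_scope.

(* least natural number satisfying P, or None (= infinity) if there is none *)
Definition least_nat (P : nat -> Prop) : option nat :=
  match pselect (exists n, `[< P n >]) with
  | left h => Some (ex_minn h)
  | right _ => None
  end.

Notation unit_interval R := (set_type (`[0%R, 1%R]%classic : set R)).

Lemma zero_in01 (R : realType) : (0 : R) \in (`[0%R, 1%R]%classic : set R).
Proof. by apply/mem_set; rewrite /= in_itv /= lexx ler01. Qed.
Lemma one_in01 (R : realType) : (1 : R) \in (`[0%R, 1%R]%classic : set R).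
Proof. by apply/mem_set; rewrite /= in_itv /= lexx ler01. Qed.

Definition i0 (R : realType) : unit_interval R := exist _ 0 (zero_in01 R).
Definition i1 (R : realType) : unit_interval R := exist _ 1 (one_in01 R).

Definition homotopic_on (R : realType) (X Y : topologicalType)
    (U : set X) (f g : X -> Y) : Prop :=
  exists H : set_type U * unit_interval R -> Y,
    continuous H /\
    (forall u : set_type U, H (u, i0 R) = f (set_val u)) /\
    (forall u : set_type U, H (u, i1 R) = g (set_val u)).

Definition hdist_le (R : realType) (X Y : topologicalType) (f g : X -> Y)
    (n : nat) : Prop :=
  exists U : 'I_n.+1 -> set X,
    (forall j, open (U j)) /\ (forall x, exists j, U j x) /\
    (forall j, homotopic_on R (U j) f g).

Definition homotopic_distance (R : realType) (X Y : topologicalType)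
    (f g : X -> Y) : option nat := least_nat (hdist_le R f g).

Definition path_set (R : realType) (Y : topologicalType)
  : set {compact-open, unit_interval R -> Y} := [set p | continuous p].
Notation path_space R Y := (set_type (@path_set R Y)).

Definition path_val (R : realType) (Y : topologicalType)
  (p : path_space R Y) : unit_interval R -> Y := set_val p.

Definition pullback_set (R : realType) (X Y : topologicalType) (f g : X -> Y)
  : set (X * path_space R Y) :=
  [set xp | path_val xp.2 (i0 R) = f xp.1 /\ path_val xp.2 (i1 R) = g xp.1].

Definition pullback_proj (R : realType) (X Y : topologicalType) (f g : X -> Y)
  (z : set_type (@pullback_set R X Y f g)) : X := (set_val z).1.

Definition local_section (E B : topologicalType) (p : E -> B) (V : set B)
  : Prop :=
  exists s : set_type V -> E, continuous s /\
    (forall v : set_type V, p (s v) = set_val v).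

Definition secat_le (E B : topologicalType) (p : E -> B) (n : nat) : Prop :=
  exists V : 'I_n.+1 -> set B,
    (forall j, open (V j)) /\ (forall b, exists j, V j b) /\
    (forall j, local_section p (V j)).

Definition secat (E B : topologicalType) (p : E -> B) : option nat :=
  least_nat (secat_le p).

From HB Require Import structures.
From mathcomp Require Import all_boot all_order all_algebra.
From mathcomp Require Import all_classical all_reals topology normedtype.
Set Implicit Arguments. Unset Strict Implicit. Unset Printing Implicit Defensive.
Import Order.TTheory GRing.Theory Num.Theory numFieldNormedType.Exports.
Local Open Scope classical_set_scope.
Local Open Scope ring_scope.

(* Since [0,1] is compact and regular, the exponential law for the compact-open
   topology identifies homotopies H : U x [0,1] -> Y with continuous maps
   U -> PY, u |-> H(u, -).  Such a map has endpoints (f u, g u) exactly when H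
   starts at f and ends at g, i.e. exactly when u |-> (u, H(u, -)) is a local
   section of q over U.  So the open covers bounding D(f,g) and secat(q) are
   the same covers. *)

Lemma set_type_compact (T : topologicalType) (A : set T) :
  compact A -> compact [set: set_type A].
Proof.
move=> cptA; have [[a0 Aa0]|A0] := pselect (A !=set0); last first.
  suff -> : [set: set_type A] = set0 by exact: compact0.
  apply/seteqP; split => // -[x Ax] _.
  by exfalso; apply: A0; exists x; exact: set_mem.
pose r (x : T) : set_type A := match pselect (A x) with
  | left Ax => exist _ x (mem_set Ax) | right _ => exist _ a0 (mem_set Aa0) end.
have rK : forall x : set_type A, r (set_val x) = x.
  move=> [x Ax]; rewrite /r /=.
  case: pselect => [Ax'|]; last by move/(_ (set_mem Ax)).
  by congr exist; exact: Prop_irrelevance.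
have cr : {within A, continuous r}.
  apply: (@continuous_comp_initial _ (subspace A) _ set_val).
  apply: (@subspace_eq_continuous T A T (fun x : subspace A => x)).
    by move=> x /set_mem Ax; rewrite /= /r /from_subspace /=; case: pselect.
  exact: (@continuous_subspaceT T T A id (fun x => cvg_id)).
have -> : [set: set_type A] = r @` A.
  apply/seteqP; split => // x _.
  by exists (set_val x); [exact/set_mem/valP | exact: rK].
exact: continuous_compact.
Qed.

Lemma compact_locally_compact (T : topologicalType) :
  compact [set: T] -> locally_compact [set: T].
Proof.
by move=> cptT x _; rewrite withinET; exists setT; [exact: filterT | split].
Qed.

Lemma unit_interval_compact (R : realType) : compact [set: unit_interval R].
Proof. exact/set_type_compact/segment_compact. Qed.

Section path_fibration_pullback.
Import ArrowAsCompactOpen.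
Variables (R : realType) (X Y : topologicalType) (f g : X -> Y).

Local Notation P := (@pullback_set R X Y f g).
Local Notation q := (@pullback_proj R X Y f g).

Lemma pullback_path_continuous :
  continuous (fun z : set_type P => path_val (set_val z).2).
Proof.
move=> z; apply: (@continuous_comp _ _ _ set_val (fun w => path_val w.2)).
  exact: initial_continuous.
apply: (@continuous_comp _ _ _ snd (fun z => path_val z)); first exact: cvg_snd.
exact: initial_continuous.
Qed.

Lemma homotopy_local_section (U : set X) :
  homotopic_on R U f g -> local_section q U.
Proof.
move=> [H [cH [H0 H1]]].
have [ccH cHu] := continuous_curry cH.
pose p (u : set_type U) : path_space R Y :=
  exist _ (curry H u : {compact-open, unit_interval R -> Y}) (mem_set (cHu u)).
have cp : continuous p by apply: continuous_comp_initial; exact: ccH.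
have Pp u : P (set_val u, p u) by split; [exact: H0 | exact: H1].
exists (fun u => exist _ (set_val u, p u) (mem_set (Pp u))); split => //.
apply: continuous_comp_initial => u.
exact: (cvg_pair (@initial_continuous _ _ _ u) (cp u)).
Qed.

Lemma local_section_homotopy (U : set X) :
  local_section q U -> homotopic_on R U f g.
Proof.
move=> [s [cs qs]].
pose phi (u : set_type U) := path_val (set_val (s u)).2.
exists (uncurry phi); split; last first.
  by split=> u; have [h0 h1] := set_mem (valP (s u));
    rewrite /= /phi ?h0 ?h1 -(qs u).
apply: continuous_uncurry_regular.
- exact/compact_locally_compact/unit_interval_compact.
- exact: uniform_regular.
- move=> u; apply: (@continuous_comp _ _ _ s (fun z => path_val (set_val z).2)).
    exact: cs.
  exact: pullback_path_continuous.
- by move=> u; exact: set_mem (valP (set_val (s u)).2).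
Qed.

Lemma homotopic_on_local_section (U : set X) :
  homotopic_on R U f g <-> local_section q U.
Proof. by split; [exact: homotopy_local_section | exact: local_section_homotopy]. Qed.

Lemma hdist_le_secat_le (n : nat) : hdist_le R f g n <-> secat_le q n.
Proof.
by split=> -[U [oU [cU hU]]]; exists U; do 2 split => //;
  move=> j; apply/homotopic_on_local_section; exact: hU.
Qed.

End path_fibration_pullback.

Theorem theorem2p8 (R : realType) (X Y : topologicalType) (f g : X -> Y)
    (hf : continuous f) (hg : continuous g) :
  homotopic_distance R f g = secat (@pullback_proj R X Y f g).
Proof.
rewrite /homotopic_distance /secat; congr least_nat.
by apply: funext => n; apply: propext; exact: hdist_le_secat_le.
Qed.
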